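(* If there is an $n$-vertex weighted graph $G=(V,w)$ with $\mathrm{cdim}(G)=k$, then $D_{\mathrm{lin}}(\mathrm{MINCUT}_n)\ge k$.
   Context: An $n$-vertex weighted graph $G=(V,w)$ is given by $w\in\mathbb{R}_{\ge0}^{\binom n2}$ on unordered pairs of distinct vertices; $E=\{e:w(e)>0\}$, $m=|E|$. For $\emptyset\ne X\subsetneq V$, $\Delta(X)$ is the set of edges of $E$ with exactly one endpoint in $X$; $\mathcal{M}(G)$ is the set of minimum-weight cuts; $\chi(S)\in\{0,1\}^m$ is the characteristic vector indexed by $E$; $\mathrm{cdim}(G)=\dim\,\mathrm{span}\{\chi(S):S\in\mathcal{M}(G)\}$. In $\mathrm{MINCUT}_n$ the input is an $n$-vertex weighted graph and the output is its minimum cut weight. A linear query $x\in\mathbb{R}^{\binom n2}$ is answered with $\langle x,w\rangle$ (adaptively). $D_{\mathrm{lin}}(\mathrm{MINCUT}_n)$ is the minimum over deterministic linear query algorithms correct on all $n$-vertex weighted graphs of the worst-case number of queries. *)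

From HB Require Import structures.
From mathcomp Require Import all_boot all_order all_algebra.
From mathcomp Require Import reals.
Set Implicit Arguments. Unset Strict Implicit. Unset Printing Implicit Defensive.
Import Order.TTheory GRing.Theory Num.Theory.
Local Open Scope ring_scope.

(* Unordered pairs of distinct vertices of 'I_n, represented as (u,v) with u < v. *)
Definition vpair (n : nat) := {p : 'I_n * 'I_n | (p.1 < p.2)%N}.
HB.instance Definition _ n := [isSub for (@sval _ _ : vpair n -> _)].
HB.instance Definition _ n := [Finite of vpair n by <:].

Section MinCut.
Variables (R : realType) (n : nat).

Definition weighted_graph (w : vpair n -> R) : Prop := forall e, 0 <= w e.

Definition crosses (X : {set 'I_n}) (e : vpair n) : bool :=
  ((val e).1 \in X) != ((val e).2 \in X).

Definition is_cut (X : {set 'I_n}) : bool := (X != set0) && (X != [set: 'I_n]).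

(* weight of the cut Delta(X) (pairs of weight 0 contribute nothing) *)
Definition cutw (w : vpair n -> R) (X : {set 'I_n}) : R :=
  \sum_(e : vpair n | crosses X e) w e.

Definition is_min_cut (w : vpair n -> R) (X : {set 'I_n}) : bool :=
  is_cut X && [forall Y : {set 'I_n}, is_cut Y ==> (cutw w X <= cutw w Y)].

Definition is_mincut_value (w : vpair n -> R) (r : R) : Prop :=
  (exists X, is_cut X /\ cutw w X = r) /\ (forall X, is_cut X -> r <= cutw w X).

(* characteristic vector of Delta(X) (edges of E = support of w crossing X);
   written with coordinates over all pairs, zero outside E *)
Definition chi (w : vpair n -> R) (X : {set 'I_n}) (e : vpair n) : R :=
  if (w e != 0) && crosses X e then 1 else 0.

(* cdim(G) = dim span { chi(S) : S in M(G) } = rank of the matrix whose rows are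
   chi(Delta(X)) for minimum cuts Delta(X) (and 0 rows otherwise) *)
Definition cdim (w : vpair n -> R) : nat :=
  \rank (\matrix_(i < #|{set 'I_n}|, j < #|{: vpair n}|)
          (if is_min_cut w (enum_val i) then chi w (enum_val i) (enum_val j)
           else 0)).

Definition query (x w : vpair n -> R) : R := \sum_e x e * w e.

(* deterministic adaptive linear query algorithms (decision trees) *)
Inductive qtree : Type :=
| QLeaf of R
| QNode of (vpair n -> R) & (R -> qtree).

Fixpoint qrun (t : qtree) (w : vpair n -> R) : R * nat :=
  match t with
  | QLeaf r => (r, 0%N)
  | QNode x k => let: (r, c) := qrun (k (query x w)) w in (r, c.+1)
  end.

Definition qout t w := (qrun t w).1.
Definition qcost t w := (qrun t w).2.

Definition solves_mincut (t : qtree) : Prop :=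
  forall w, weighted_graph w -> is_mincut_value w (qout t w).

End MinCut.

From HB Require Import structures.
From mathcomp Require Import all_boot all_order all_algebra.
From mathcomp Require Import reals ring lra.
Set Implicit Arguments. Unset Strict Implicit. Unset Printing Implicit Defensive.
Import Order.TTheory GRing.Theory Num.Theory.
Local Open Scope ring_scope.

(* Fix a correct algorithm t and the graph w, and let x_1, ..., x_q be the
   queries t asks on input w.  Suppose d is a direction supported on the
   edge set E of w and orthogonal to every x_l.  Then t cannot distinguish w
   from w + eps d, and for eps small enough w + eps d is still a weighted
   graph.  If some minimum cut S had <chi(S), d> = s <> 0, moving in the
   direction -s d would lower the weight of S below the (unchanged) answer of
   t, contradicting correctness.  Hence every chi(S), S in M(G), is orthogonal
   to the common kernel of the queries restricted to E, i.e. lies in their row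
   space, so cdim(G) <= q. *)

Lemma submx_of_kernel (F : fieldType) (m1 m2 N : nat)
    (A : 'M[F]_(m1, N)) (B : 'M[F]_(m2, N)) :
  (forall v : 'cV_N, B *m v = 0 -> A *m v = 0) -> (A <= B)%MS.
Proof.
move=> kerAB; rewrite submxE; apply/eqP/matrixP => i j.
have colj : col j (A *m cokermx B) = 0.
  by rewrite !colE -mulmxA kerAB // mulmxA mulmx_coker mul0mx.
by move/matrixP: colj => /(_ i 0); rewrite !mxE.
Qed.

Lemma sum_enum_val (T : finType) (V : nmodType) (F : T -> V) :
  \sum_(j < #|{: T}|) F (enum_val j) = \sum_x F x.
Proof.
rewrite (reindex (@enum_val _ (@predT T))) //.
by apply: onW_bij; apply: enum_val_bij.
Qed.

Section DecisionTrees.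
Variables (R : realType) (n : nat).

Fixpoint qpath (t : qtree R n) (w : vpair n -> R) : seq (vpair n -> R) :=
  match t with
  | QLeaf _ => [::]
  | QNode x k => x :: qpath (k (query x w)) w
  end.

Definition qnth (t : qtree R n) (w : vpair n -> R) (i : nat) : vpair n -> R :=
  nth (fun=> 0) (qpath t w) i.

Lemma size_qpath (t : qtree R n) (w : vpair n -> R) :
  size (qpath t w) = qcost t w.
Proof.
elim: t => [r|x k IH] //=; rewrite /qcost /=.
by case E: (qrun _ _) => [r c] /=; rewrite IH /qcost E.
Qed.

Lemma qrun_same (t : qtree R n) (w w' : vpair n -> R) :
  (forall i, (i < size (qpath t w))%N -> query (qnth t w i) w' = query (qnth t w i) w) ->
  qrun t w' = qrun t w.
Proof.
elim: t => [r|x k IH] //= agree.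
by rewrite (agree 0%N) // IH // => i lti; exact: (agree i.+1).
Qed.

End DecisionTrees.

Section Perturbation.
Variables (R : realType) (n : nat).
Implicit Types (w d x : vpair n -> R) (X : {set 'I_n}).

Definition supported w d : Prop := forall e, w e = 0 -> d e = 0.

Definition shift w c d : vpair n -> R := fun e => w e + c * d e.

Lemma query_scale x c d : query x (fun e => c * d e) = c * query x d.
Proof.
by rewrite /query mulr_sumr; apply: eq_bigr => e _; rewrite mulrCA.
Qed.

Lemma query_shift x w c d : query x (shift w c d) = query x w + c * query x d.
Proof.
rewrite /query mulr_sumr -big_split; apply: eq_bigr => e _.
by rewrite /shift /=; ring.
Qed.

Lemma cutw_query w X : cutw w X = query (fun e => (crosses X e)%:R) w.
Proof.
rewrite /cutw /query big_mkcond; apply: eq_bigr => e _.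
by case: (crosses X e); rewrite ?mul1r ?mul0r.
Qed.

Lemma query_chi {w d} X :
  supported w d -> query (fun e => (crosses X e)%:R) d = query (chi w X) d.
Proof.
move=> supp_d; apply: eq_bigr => e _; rewrite /chi.
case: (eqVneq (w e) 0) => [/supp_d ->|_]; first by rewrite !mulr0.
by case: (crosses X e).
Qed.

Lemma cutw_shift w c d X :
  supported w d -> cutw (shift w c d) X = cutw w X + c * query (chi w X) d.
Proof. by move=> supp_d; rewrite !cutw_query query_shift (query_chi X supp_d). Qed.

Lemma small_step w d :
  weighted_graph w -> supported w d ->
  exists2 eps : R, 0 < eps & weighted_graph (shift w eps d).
Proof.
move=> w_ge0 supp_d.
pose T := \sum_(e | w e != 0) `|d e| / w e.
have T_ge0 : 0 <= T by apply: sumr_ge0 => e _; rewrite divr_ge0.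
exists (1 + T)^-1; first by rewrite invr_gt0; lra.
have epsT : (1 + T)^-1 * (1 + T) = 1 by rewrite mulVf //; apply/eqP; lra.
move=> e; rewrite /shift; case: (eqVneq (w e) 0) => we0.
  by rewrite supp_d // mulr0 addr0 we0.
have we_gt0 : 0 < w e by rewrite lt_def we0 w_ge0.
have ratio_le : `|d e| / w e <= T.
  rewrite /T (bigD1 e) //= lerDl; apply: sumr_ge0 => e' _.
  by rewrite divr_ge0.
have norm_le : `|d e| <= T * w e by rewrite -ler_pdivrMr.
have d_ge : - `|d e| <= d e by rewrite lerNl -normrN ler_norm.
have eps_gt0 : 0 < (1 + T)^-1 by rewrite invr_gt0; lra.
nra.
Qed.

Lemma min_cut_value w X r :
  is_min_cut w X -> is_mincut_value w r -> cutw w X = r.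
Proof.
case/andP=> cutX /forallP minX [[Y [cutY <-]] minr].
by apply/eqP; rewrite eq_le (implyP (minX Y) cutY) minr.
Qed.

End Perturbation.

Section Adversary.
Variables (R : realType) (n : nat) (t : qtree R n).
Hypothesis t_correct : solves_mincut t.

Lemma min_cut_orthogonal (w d : vpair n -> R) (S : {set 'I_n}) :
  weighted_graph w -> supported w d ->
  (forall i, (i < size (qpath t w))%N -> query (qnth t w i) d = 0) ->
  is_min_cut w S -> query (chi w S) d = 0.
Proof.
move=> w_ge0 supp_d blind minS; set s := query (chi w S) d.
apply/eqP/negPn/negP => s_neq0.
pose d' := fun e => - s * d e.
have supp_d' : supported w d' by move=> e /supp_d; rewrite /d' => ->; rewrite mulr0.
have [eps eps_gt0 w'_ge0] := small_step w_ge0 supp_d'.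
have same_run : qrun t (shift w eps d') = qrun t w.
  apply: qrun_same => i lti.
  by rewrite query_shift query_scale blind // !mulr0 addr0.
have cutS : cutw w S = qout t w := min_cut_value minS (t_correct w_ge0).
have [_ min'] := t_correct w'_ge0.
have := min' S (proj1 (andP minS)).
rewrite /qout same_run -/(qout t w) -cutS cutw_shift // query_scale -/s.
have s2_gt0 : 0 < s * s by rewrite -expr2 exprn_even_gt0.
nra.
Qed.

Definition restrict (w : vpair n -> R) (v : 'cV[R]_#|{: vpair n}|) : vpair n -> R :=
  fun e => if w e != 0 then v (enum_rank e) 0 else 0.

Lemma supported_restrict w v : supported w (restrict w v).
Proof. by move=> e we0; rewrite /restrict we0 eqxx. Qed.

Definition query_mx (w : vpair n -> R) : 'M[R]_(size (qpath t w), #|{: vpair n}|) :=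
  \matrix_(i, j) (if w (enum_val j) != 0 then qnth t w i (enum_val j) else 0).

Lemma query_mxE w v i :
  (query_mx w *m v) i 0 = query (qnth t w i) (restrict w v).
Proof.
rewrite mxE /query -[RHS]sum_enum_val; apply: eq_bigr => j _.
rewrite mxE /restrict enum_valK.
by case: (w (enum_val j) != 0); rewrite ?mul0r ?mulr0.
Qed.

Definition min_cut_mx (w : vpair n -> R) : 'M[R]_(#|{set 'I_n}|, #|{: vpair n}|) :=
  \matrix_(i, j)
    (if is_min_cut w (enum_val i) then chi w (enum_val i) (enum_val j) else 0).

Lemma cdimE w : cdim w = \rank (min_cut_mx w).
Proof. by []. Qed.

Lemma min_cut_mxE w v i :
  (min_cut_mx w *m v) i 0 =
    if is_min_cut w (enum_val i) then query (chi w (enum_val i)) (restrict w v) else 0.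
Proof.
rewrite mxE; case: ifP => minS.
  rewrite /query -[RHS]sum_enum_val; apply: eq_bigr => j _.
  rewrite mxE minS /restrict /chi enum_valK.
  by case: (w (enum_val j) != 0); rewrite ?mul0r ?mulr0.
by apply: big1 => j _; rewrite mxE minS mul0r.
Qed.

Lemma cdim_le_qcost (w : vpair n -> R) :
  weighted_graph w -> (cdim w <= qcost t w)%N.
Proof.
move=> w_ge0; rewrite cdimE -size_qpath.
apply: leq_trans (rank_leq_row (query_mx w)); apply: mxrankS.
apply: submx_of_kernel => v blind; apply/matrixP => i j.
rewrite ord1 min_cut_mxE [RHS]mxE; case: ifP => // minS.
apply: min_cut_orthogonal => //; first exact: supported_restrict.
by move=> l ltl; rewrite -(query_mxE v (Ordinal ltl)) blind mxE.
Qed.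

End Adversary.

Theorem corollary6 (R : realType) (n k : nat) :
  (exists w : vpair n -> R, weighted_graph w /\ cdim w = k) ->
  forall t : qtree R n, solves_mincut t ->
    exists w : vpair n -> R, weighted_graph w /\ (k <= qcost t w)%N.
Proof.
move=> [w [w_ge0 <-]] t t_correct.
by exists w; split => //; exact: cdim_le_qcost.
Qed.
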